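(* If $G$ is a $2$-free circular interval digraph on $n$ vertices, then $\tilde{P}_3(G) \leq n^3/16$.
   Context: Digraphs are finite, loopless, with at most one edge $uv$ per ordered pair of distinct vertices. A digraph is $2$-free if there are no distinct $u,v$ with both $uv$ and $vu$ edges. A digraph $G$ is a circular interval digraph if its vertices can be arranged in a circle such that for every triple $u,v,w$ of distinct vertices in clockwise order, if $uw \in E(G)$ then $uv, vw \in E(G)$. An induced $3$-vertex directed path is a triple $(a,b,c)$ of distinct vertices with $ab,bc$ edges and neither $ac$ nor $ca$ an edge; $\tilde{P}_3(G)$ is the number of these. *)

From mathcomp Require Import all_boot.
Set Implicit Arguments. Unset Strict Implicit. Unset Printing Implicit Defensive.

(* A digraph on a finite vertex type T is an edge relation e : rel T;
   e u v means uv is an edge.  At most one edge per ordered pair is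
   automatic.  Loopless: e is irreflexive. *)
Definition loopless (T : finType) (e : rel T) : Prop := forall u, ~~ e u u.

Definition two_free (T : finType) (e : rel T) : Prop :=
  forall u v, u != v -> ~~ (e u v && e v u).

(* Given positions p : T -> 'I_n (a bijection onto the circle positions
   0..n-1, clockwise), distinct u v w are in clockwise order iff their
   positions are cyclically increasing. *)
Definition cw (T : finType) (n : nat) (p : T -> 'I_n) (u v w : T) : bool :=
  [|| (p u < p v < p w), (p v < p w < p u) | (p w < p u < p v)].

Definition circular_interval (T : finType) (e : rel T) : Prop :=
  exists p : T -> 'I_#|T|, bijective p /\
    forall u v w : T, u != v -> v != w -> u != w ->
      cw p u v w -> e u w -> e u v && e v w.

Definition induced_P3 (T : finType) (e : rel T) (t : T * T * T) : bool :=
  let: (a, b, c) := t in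
  [&& a != b, b != c, a != c, e a b, e b c, ~~ e a c & ~~ e c a].

Definition P3count (T : finType) (e : rel T) : nat :=
  #|[set t : T * T * T | induced_P3 e t]|.

From mathcomp Require Import all_boot all_algebra.
From mathcomp Require Import zify.
Import GRing.Theory Num.Theory.
Set Implicit Arguments. Unset Strict Implicit. Unset Printing Implicit Defensive.

(* Place the vertices on the circle and let [dist x y] be the clockwise
   distance.  The interval property makes the out-neighbourhood of [x] the
   interval of length [out_reach x] right after [x], and the in-neighbourhood
   of [y] the interval of length [in_reach y] right before [y]; 2-freeness
   makes the two intervals around a vertex disjoint, leaving [gap x] other
   non-neighbours.  For an edge [xy] of length [d], the induced paths [x y c]
   have [c] in a window of size [min (d + out_reach y - out_reach x) (gap x)],
   and symmetrically for the paths [a x y].  Counting each induced path from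
   its first and its last edge bounds [2 P3] by a sum over edges.  Using the
   first term of the minimum for short edges ([d <= (n-1)/4]) and the gap for
   long ones splits each edge's bound into a charge to its tail depending on
   [(x, d)] and one to its head depending on [(y, d)]; regrouped by vertex,
   each vertex receives an explicit quadratic charge of at most [n^2/8]. *)

Lemma count_window_ord N lo hi :
  \sum_(i < N) (lo < i <= hi : nat) = minn N hi.+1 - minn N lo.+1.
Proof.
elim: N => [|N IH]; first by rewrite big_ord0 !min0n.
by rewrite big_ord_recr /= IH; case: (lo < N <= hi) /andP; lia.
Qed.

Section Arithmetic.
Local Open Scope ring_scope.

(* Two halves of the per-vertex estimate: [(K - u) u <= K^2 / 4], and for
   [N = 4m + r + 1] with [r <= 3] and [K = 2m + r], [8m(m+1) + 2K^2 <= N^2]. *)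
Lemma quarter_square_bound (K u m r : int) :
  K = 2 * m + r -> 0 <= r <= 3 -> 0 <= m ->
  8 * (m * (m + 1)) + 8 * ((K - u) * u) <= (4 * m + r + 1) * (4 * m + r + 1).
Proof.
move=> -> r_bounds m_ge0.
have : r = 0 \/ r = 1 \/ r = 2 \/ r = 3 by lia.
case=> [|[|[|]]] ->.
- by have := sqr_ge0 (m - u); nia.
- by have := sqr_ge0 (2 * m + 1 - 2 * u); nia.
- by have := sqr_ge0 (m + 1 - u); nia.
- have odd : 1 <= 2 * m + 3 - 2 * u \/ 2 * m + 3 - 2 * u <= -1 by lia.
  nia.
Qed.

(* The per-vertex estimate in closed form, for [N] vertices, out-reach [q],
   in-reach [p], threshold [M = (N - 1) / 4] and [a = min q M], [b = min p M]. *)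
Lemma vertex_arith (N q p M a b : int) :
  0 <= q -> 0 <= p -> q + p <= N - 1 -> 0 <= M -> 4 * M <= N - 1 <= 4 * M + 3 ->
  (q <= M /\ a = q) \/ (M <= q /\ a = M) -> (p <= M /\ b = p) \/ (M <= p /\ b = M) ->
  8 * (a * (a + 1) + (p - q) * a + (N - 1 - q - p) * (q - a) +
       ((q - p) * b + (N - 1 - q - p) * (p - b))) <= N * N.
Proof.
move=> q_ge0 p_ge0 qp_le M_ge0 N_bounds a_def b_def.
have key u : 8 * (M * (M + 1)) + 8 * ((N - 1 - 2 * M - u) * u) <= N * N.
  have := @quarter_square_bound (N - 1 - 2 * M) u M (N - 1 - 4 * M).
  have -> : 4 * M + (N - 1 - 4 * M) + 1 = N by lia.
  by apply; lia.
case: a_def => -[a_bound ->]; case: b_def => -[b_bound ->].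
- by have := key 0; nia.
- by have := key (p - M); nia.
- by have := key (q - M); nia.
- by have := key (q + p - 2 * M); nia.
Qed.

Definition ramp (m : nat) (al be ga : int) (d : nat) : int :=
  if (d <= m)%N then al * (2 * d)%:Z + be else ga.

Lemma ramp_sum m al be ga K :
  \sum_(1 <= i < K.+1) ramp m al be ga i =
  al * (minn K m * (minn K m + 1))%:Z + be * (minn K m)%:Z + ga * (K - minn K m)%:Z.
Proof.
elim: K => [|K IH]; first by rewrite big_geq // min0n !mulr0 !addr0.
rewrite big_nat_recr //= IH /ramp; case: (leqP K.+1 m) => [le|lt].
  by rewrite (minn_idPl (ltnW le)) subnn; lia.
rewrite (minn_idPr (lt : (m <= K)%N)).
have -> : (K.+1 - m)%:Z = (K - m)%:Z + 1 by lia.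
by rewrite mulrDr mulr1 addrA.
Qed.

Lemma sum_window (F : nat -> int) N K : (K < N)%N ->
  \sum_(i < N) (if (0 < i <= K)%N then F i else 0) = \sum_(1 <= i < K.+1) F i.
Proof.
move=> ltKN; rewrite -(big_mkord xpredT (fun i => if (0 < i <= K)%N then F i else 0)).
rewrite (big_cat_nat (leq0n K.+1) ltKN) /=.
rewrite [X in _ + X]big_nat_cond [X in _ + X]big1 => [|i /andP[/andP[lt _] _]].
  rewrite addr0 big_ltn //= add0r; apply: eq_big_nat => i /andP[-> le].
  by rewrite -ltnS le.
by rewrite (leqNgt i K) lt andbF.
Qed.
End Arithmetic.

Section Circle.
Variables (T : finType) (n : nat) (pos : T -> 'I_n).
Hypothesis pos_bij : bijective pos.

Lemma card_T : #|T| = n.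
Proof. by rewrite (bij_eq_card pos_bij) card_ord. Qed.

Lemma pos_neq x y : x != y -> pos x <> pos y :> nat.
Proof. by move=> /eqP nxy /val_inj /(bij_inj pos_bij). Qed.

Definition dist (x y : T) : nat :=
  if pos x <= pos y then pos y - pos x else n + pos y - pos x.

Ltac circle_arith := rewrite /dist /cw; repeat case: ifP => ?; lia.

Lemma dist_lt x y : dist x y < n.
Proof. have := ltn_ord (pos x); have := ltn_ord (pos y); circle_arith. Qed.

Lemma distxx x : dist x x = 0.
Proof. by rewrite /dist leqnn subnn. Qed.

Lemma dist_gt0 x y : x != y -> 0 < dist x y.
Proof.
move=> /pos_neq nxy; have := ltn_ord (pos x); have := ltn_ord (pos y).
circle_arith.
Qed.

Lemma dist_neq x y : 0 < dist x y -> x != y.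
Proof. by apply: contraTneq => ->; rewrite distxx. Qed.

Lemma dist_sym x y : x != y -> dist x y + dist y x = n.
Proof.
move=> /pos_neq nxy; have := ltn_ord (pos x); have := ltn_ord (pos y).
circle_arith.
Qed.

Lemma dist_inj_l x : injective (dist x).
Proof.
move=> y z eq_yz; apply: (bij_inj pos_bij); apply: ord_inj; move: eq_yz.
have := ltn_ord (pos x); have := ltn_ord (pos y); have := ltn_ord (pos z).
circle_arith.
Qed.

Lemma dist_inj_r y : injective (dist^~ y).
Proof.
move=> x z eq_xz; apply: (bij_inj pos_bij); apply: ord_inj; move: eq_xz.
have := ltn_ord (pos x); have := ltn_ord (pos y); have := ltn_ord (pos z).
circle_arith.
Qed.

Lemma dist_add u v w :
  0 < dist u v < dist u w -> dist u w = dist u v + dist v w.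
Proof.
have := ltn_ord (pos u); have := ltn_ord (pos v); have := ltn_ord (pos w).
circle_arith.
Qed.

Lemma dist_between u v w :
  (0 < dist v w < dist u w) = (0 < dist u v < dist u w).
Proof.
have := ltn_ord (pos u); have := ltn_ord (pos v); have := ltn_ord (pos w).
move=> *; apply/idP/idP; circle_arith.
Qed.

Lemma cw_dist u v w : u != v -> v != w -> u != w ->
  cw pos u v w = (0 < dist u v < dist u w).
Proof.
move=> /pos_neq nuv /pos_neq nvw /pos_neq nuw.
have := ltn_ord (pos u); have := ltn_ord (pos v); have := ltn_ord (pos w).
move=> *; apply/idP/idP; circle_arith.
Qed.

(* An injective [f : T -> nat] with values below [n = #|T|] is a bijection
   onto [[0, n)], so big operators of [F (f y)] reindex to [[0, n)]. *)
Lemma big_reindex_nat (R : Type) (idx : R) (op : Monoid.com_law idx)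
    (f : T -> nat) (F : nat -> R) :
  injective f -> (forall y, f y < n) ->
  \big[op/idx]_y F (f y) = \big[op/idx]_(i < n) F i.
Proof.
move=> f_inj f_lt; pose g y := Ordinal (f_lt y).
have g_bij : bijective g.
  apply: inj_card_bij; last by rewrite card_T card_ord.
  by move=> y z /(congr1 val) /f_inj.
by rewrite (reindex g) //; apply: onW_bij.
Qed.

Lemma count_window (f : T -> nat) lo hi :
  injective f -> (forall y, f y < n) ->
  \sum_y (lo < f y <= hi : nat) <= hi - lo.
Proof.
move=> f_inj f_lt.
by rewrite (big_reindex_nat _ (fun i => (lo < i <= hi : nat)) f_inj f_lt)
           count_window_ord; lia.
Qed.

Variable e : rel T.
Hypothesis e_loopless : loopless e.
Hypothesis e_two_free : two_free e.
Hypothesis e_interval : forall u v w : T, u != v -> v != w -> u != w ->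
  cw pos u v w -> e u w -> e u v && e v w.

Lemma edge_neq x y : e x y -> x != y.
Proof. by apply: contraTneq => ->; apply: e_loopless. Qed.

Lemma interval_l u v w : e u w -> 0 < dist u v < dist u w -> e u v && e v w.
Proof.
move=> euw between; have /andP[dv lt_vw] := between.
have nuv : u != v := dist_neq dv.
have nvw : v != w by apply: contraTneq lt_vw => ->; rewrite ltnn.
have nuw := edge_neq euw.
by apply: e_interval; rewrite ?cw_dist.
Qed.

Lemma interval_r u v w : e u w -> 0 < dist v w < dist u w -> e u v && e v w.
Proof. by rewrite dist_between; apply: interval_l. Qed.

Definition out_reach x := \max_(y | e x y) dist x y.
Definition in_reach y := \max_(x | e x y) dist x y.

Lemma bigmax_attained (I : finType) (P : pred I) (F : I -> nat) :
  0 < \max_(i | P i) F i -> exists2 i, P i & F i = \max_(i | P i) F i.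
Proof.
case: (pickP P) => [i0 Pi0 _|P0]; last by rewrite big_pred0.
exists [arg max_(i > i0 | P i) F i]; first by case: arg_maxnP.
by rewrite (bigmax_eq_arg i0).
Qed.

Lemma out_reach_attained x :
  0 < out_reach x -> exists2 w, e x w & dist x w = out_reach x.
Proof. exact: bigmax_attained. Qed.

Lemma in_reach_attained y :
  0 < in_reach y -> exists2 w, e w y & dist w y = in_reach y.
Proof. exact: bigmax_attained. Qed.

Lemma out_reach_lt x : out_reach x < n.
Proof.
have := ltn_ord (pos x); suff : out_reach x <= n.-1 by lia.
by apply/bigmax_leqP => y _; have := dist_lt x y; lia.
Qed.

Lemma in_reach_lt y : in_reach y < n.
Proof.
have := ltn_ord (pos y); suff : in_reach y <= n.-1 by lia.
by apply/bigmax_leqP => x _; have := dist_lt x y; lia.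
Qed.

Lemma out_edgeE x y : e x y = (0 < dist x y <= out_reach x).
Proof.
apply/idP/andP => [exy|[dy le_dy]].
  by split; [apply: dist_gt0; apply: edge_neq | apply: leq_bigmax_cond].
have [w exw dw] := out_reach_attained (leq_trans dy le_dy).
rewrite -dw in le_dy.
case: (ltngtP (dist x y) (dist x w)) => [lt|gt|/dist_inj_l -> //].
- by move: (interval_l (v := y) exw); rewrite dy lt => /(_ isT) /andP[].
- by rewrite leqNgt gt in le_dy.
Qed.

Lemma in_edgeE x y : e x y = (0 < dist x y <= in_reach y).
Proof.
apply/idP/andP => [exy|[dx le_dx]].
  split; first by apply: dist_gt0; apply: edge_neq.
  exact: (leq_bigmax_cond (P := e^~ y)).
have [w ewy dw] := in_reach_attained (leq_trans dx le_dx).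
rewrite -dw in le_dx.
case: (ltngtP (dist x y) (dist w y)) => [lt|gt|/dist_inj_r -> //].
- by move: (interval_r (v := x) ewy); rewrite dx lt => /(_ isT) /andP[].
- by rewrite leqNgt gt in le_dx.
Qed.

(* 2-freeness: the out- and in-neighbourhoods of [x] do not overlap. *)
Lemma reach_sum_lt x : out_reach x + in_reach x < n.
Proof.
have lt_in := in_reach_lt x.
case: (posnP (out_reach x)) => [->|/out_reach_attained [w exw <-]].
  by rewrite add0n.
rewrite ltnNge; apply/negP => ge_n; have nxw := edge_neq exw.
have ewx : e w x.
  by rewrite in_edgeE dist_gt0 1?eq_sym //=; have := dist_sym nxw; lia.
by have := e_two_free nxw; rewrite exw ewx.
Qed.

(* Along an edge [xy], the out-interval of [y] ends no earlier than that of
   [x] (as [x]'s farthest out-neighbour is also an out-neighbour of [y]) ... *)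
Lemma out_reach_step x y : e x y -> out_reach x <= dist x y + out_reach y.
Proof.
move=> exy; case: (leqP (out_reach x) (dist x y)) => [le|lt].
  exact: leq_trans le (leq_addr _ _).
have [w exw dw] := out_reach_attained (leq_ltn_trans (leq0n _) lt).
have between : 0 < dist x y < dist x w by rewrite dist_gt0 ?edge_neq // dw.
have /andP[_ eyw] := interval_l exw between.
rewrite -dw (dist_add between) leq_add2l.
by move: eyw; rewrite out_edgeE => /andP[].
Qed.

Lemma in_reach_step x y : e x y -> in_reach y <= dist x y + in_reach x.
Proof.
move=> exy; case: (leqP (in_reach y) (dist x y)) => [le|lt].
  exact: leq_trans le (leq_addr _ _).
have [w ewy dw] := in_reach_attained (leq_ltn_trans (leq0n _) lt).
have between : 0 < dist x y < dist w y by rewrite dist_gt0 ?edge_neq // dw.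
have /andP[ewx _] := interval_r ewy between.
rewrite dist_between in between.
rewrite -dw (dist_add between) addnC leq_add2l.
by move: ewx; rewrite in_edgeE => /andP[].
Qed.

(* The number of vertices other than [x] that are not adjacent to [x]. *)
Definition gap x := n.-1 - out_reach x - in_reach x.

Lemma induced_last x y c : induced_P3 e (x, y, c) ->
  out_reach x < dist x c <= minn (dist x y + out_reach y) (n.-1 - in_reach x).
Proof.
case/and3P => nxy nyc /and5P[nxc exy eyc not_exc not_ecx].
have [dxy dxc] := (dist_gt0 nxy, dist_gt0 nxc).
have via_y : dist x c = dist x y + dist y c.
  apply: dist_add; rewrite dxy /=.
  case: (ltngtP (dist x y) (dist x c)) => [//|lt|/dist_inj_l eq_yc].
    have /andP[exc _] : e x c && e c y.
      by apply: (interval_l (v := c) exy); rewrite dxc lt.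
    by rewrite exc in not_exc.
  by rewrite eq_yc eqxx in nyc.
rewrite out_edgeE dxc /= -ltnNge in not_exc.
rewrite in_edgeE dist_gt0 1?eq_sym //= -ltnNge in not_ecx.
move: eyc; rewrite out_edgeE => /andP[_ le_yc].
have := dist_sym nxc; lia.
Qed.

Lemma induced_first a x y : induced_P3 e (a, x, y) ->
  in_reach y < dist a y <= minn (dist x y + in_reach x) (n.-1 - out_reach y).
Proof.
case/and3P => nax nxy /and5P[nay eax exy not_eay not_eya].
have [dxy day] := (dist_gt0 nxy, dist_gt0 nay).
have via_x : dist a y = dist a x + dist x y.
  apply: dist_add; rewrite -dist_between dxy /=.
  case: (ltngtP (dist x y) (dist a y)) => [//|lt|/dist_inj_r eq_xa].
    have /andP[_ eay] : e x a && e a y.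
      by apply: (interval_r (v := a) exy); rewrite day lt.
    by rewrite eay in not_eay.
  by rewrite eq_xa eqxx in nax.
rewrite in_edgeE day /= -ltnNge in not_eay.
rewrite out_edgeE dist_gt0 1?eq_sym //= -ltnNge in not_eya.
move: eax; rewrite in_edgeE => /andP[_ le_ax].
have := dist_sym nay; lia.
Qed.

Definition P3_from x y := \sum_c (induced_P3 e (x, y, c) : nat).
Definition P3_into x y := \sum_a (induced_P3 e (a, x, y) : nat).

Lemma P3_from_le x y :
  P3_from x y <= minn (dist x y + out_reach y - out_reach x) (gap x).
Proof.
apply: (@leq_trans (\sum_c (out_reach x < dist x c <=
           minn (dist x y + out_reach y) (n.-1 - in_reach x) : nat))).
  by apply: leq_sum => c _; case: (boolP (induced_P3 _ _)) => // /induced_last ->.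
apply: leq_trans (count_window _ _ (@dist_inj_l x) (dist_lt x)) _.
rewrite /gap; lia.
Qed.

Lemma P3_into_le x y :
  P3_into x y <= minn (dist x y + in_reach x - in_reach y) (gap y).
Proof.
apply: (@leq_trans (\sum_a (in_reach y < dist a y <=
           minn (dist x y + in_reach x) (n.-1 - out_reach y) : nat))).
  by apply: leq_sum => a _; case: (boolP (induced_P3 _ _)) => // /induced_first ->.
apply: leq_trans (count_window _ _ (@dist_inj_r y) (dist_lt^~ y)) _.
rewrite /gap; lia.
Qed.

Lemma P3_nonedge x y : ~~ e x y -> P3_from x y + P3_into x y = 0.
Proof.
move=> /negbTE nexy; rewrite /P3_from /P3_into !big1 // => ? _;
  by rewrite /induced_P3 nexy !andbF.
Qed.

(* Each induced path [a b c] is counted once from its first edge [ab] and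
   once from its last edge [bc]. *)
Lemma P3count_double :
  2 * P3count e = \sum_x \sum_y (P3_from x y + P3_into x y).
Proof.
have triple : P3count e = \sum_a \sum_b \sum_c (induced_P3 e (a, b, c) : nat).
  rewrite /P3count -sum1_card big_mkcond /=.
  rewrite (pair_big xpredT xpredT (fun a b => \sum_c (induced_P3 e (a, b, c) : nat))).
  rewrite (pair_big xpredT xpredT (fun p c => (induced_P3 e (p.1, p.2, c) : nat))).
  by apply: eq_bigr => -[[a b] c] _; rewrite inE; case: induced_P3.
rewrite mul2n -addnn triple [X in _ + X]exchange_big -big_split.
apply: eq_bigr => x _; rewrite /P3_from /P3_into big_split /=; congr (_ + _).
exact: exchange_big.
Qed.

Local Open Scope ring_scope.

Definition threshold := (n.-1 %/ 4)%N.

(* For an edge [xy] of length [d], the bound on [P3_from x y + P3_into x y]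
   is split into a charge [out_weight x d] to the tail and [in_weight y d] to
   the head: for short edges we use the reach steps, for long ones the gaps. *)
Definition out_weight x :=
  ramp threshold 1 ((in_reach x)%:Z - (out_reach x)%:Z) (gap x)%:Z.
Definition in_weight y :=
  ramp threshold 0 ((out_reach y)%:Z - (in_reach y)%:Z) (gap y)%:Z.

(* The charges cover the induced paths through an edge: the reach steps
   keep the short-edge bound nonnegative, so no truncation is lost. *)
Lemma edge_weight x y : e x y ->
  (P3_from x y + P3_into x y)%:Z <= out_weight x (dist x y) + in_weight y (dist x y).
Proof.
move=> exy; have := P3_from_le x y; have := P3_into_le x y.
have := out_reach_step exy; have := in_reach_step exy.
by rewrite /out_weight /in_weight /ramp; case: ifP => _; lia.
Qed.

Lemma sum_out_edges x (F : nat -> int) :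
  \sum_(y | e x y) F (dist x y) = \sum_(1 <= i < (out_reach x).+1) F i.
Proof.
rewrite big_mkcond -(sum_window F (out_reach_lt x)).
rewrite -(big_reindex_nat _ (fun i => if (0 < i <= out_reach x)%N then F i else 0)
            (@dist_inj_l x) (dist_lt x)).
by apply: eq_bigr => y _; rewrite out_edgeE.
Qed.

Lemma sum_in_edges y (F : nat -> int) :
  \sum_(x | e x y) F (dist x y) = \sum_(1 <= i < (in_reach y).+1) F i.
Proof.
rewrite big_mkcond -(sum_window F (in_reach_lt y)).
rewrite -(big_reindex_nat _ (fun i => if (0 < i <= in_reach y)%N then F i else 0)
            (@dist_inj_r y) (dist_lt^~ y)).
by apply: eq_bigr => x _; rewrite in_edgeE.
Qed.

Definition charge v :=
  \sum_(1 <= i < (out_reach v).+1) out_weight v i +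
  \sum_(1 <= i < (in_reach v).+1) in_weight v i.

Lemma sum_charge :
  \sum_x \sum_(y | e x y) (out_weight x (dist x y) + in_weight y (dist x y)) =
  \sum_v charge v.
Proof.
under eq_bigr do rewrite big_split /=.
rewrite big_split /= [X in _ + X](exchange_big_dep xpredT) //= -big_split /=.
by apply: eq_bigr => v _; rewrite sum_out_edges sum_in_edges.
Qed.

Lemma charge_bound v : 8 * charge v <= (n * n)%:Z.
Proof.
rewrite /charge /out_weight /in_weight !ramp_sum mul0r add0r mul1r /gap.
have qp := reach_sum_lt v.
have th : (4 * threshold <= n.-1 < 4 * threshold + 4)%N by rewrite /threshold; lia.
have -> : ((n.-1 - out_reach v - in_reach v)%N : int) =
          n%:Z - 1 - (out_reach v)%:Z - (in_reach v)%:Z by lia.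
have -> : ((out_reach v - minn (out_reach v) threshold)%N : int) =
          (out_reach v)%:Z - (minn (out_reach v) threshold)%:Z by lia.
have -> : ((in_reach v - minn (in_reach v) threshold)%N : int) =
          (in_reach v)%:Z - (minn (in_reach v) threshold)%:Z by lia.
rewrite !PoszM PoszD.
by apply: (@vertex_arith _ _ _ threshold); lia.
Qed.

Lemma P3_bound : (16 * P3count e <= n ^ 3)%N.
Proof.
have charged : (2 * P3count e)%:Z <= \sum_v charge v.
  rewrite -sum_charge P3count_double (big_morph Posz PoszD (erefl : Posz 0 = 0)).
  apply: ler_sum => x _.
  rewrite (big_morph Posz PoszD (erefl : Posz 0 = 0)) [X in _ <= X]big_mkcond.
  by apply: ler_sum => y _; case: ifP => [/edge_weight //|/negbT /P3_nonedge ->].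
have total : 8 * \sum_v charge v <= \sum_(v : T) (n * n)%:Z.
  by rewrite mulr_sumr; apply: ler_sum => v _; apply: charge_bound.
rewrite sumr_const card_T -mulr_natr natz in total.
lia.
Qed.
End Circle.

Theorem theorem1 (T : finType) (e : rel T) :
  loopless e -> two_free e -> circular_interval e ->
  16 * P3count e <= #|T| ^ 3.
Proof.
move=> e_loopless e_two_free [pos [pos_bij e_interval]].
exact: (P3_bound pos_bij e_loopless e_two_free e_interval).
Qed.
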